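(* Let $S=\langle T,\Pi,C\rangle$ be a state space and let $(A_i,\psi_i)$, $1\le i\le k$, be abstractions of $S$ forming an additive abstraction system, and let $t,g\in T$. If $h_{add}(t,g)<C^*_j(t_j,g_j)+R^*_j(t_j,g_j)$ for some $j\in\{1,\dots,k\}$, then $h_{add}(t,g)\ne OPT(t,g)$.
   Context: A state space is a weighted directed graph $S=\langle T,\Pi,C\rangle$ where $T$ is a finite set of states, $\Pi\subseteq T\times T$ is a set of directed edges, and $C:\Pi\to\mathbb{N}=\{0,1,2,\dots\}$. A path from $u$ to $v$ is a sequence of edges $\langle\pi^1,\dots,\pi^n\rangle$ with $\pi^j=(u^{j-1},u^j)\in\Pi$, $u^0=u$, $u^n=v$; its cost is $C(\pi)=\sum_j C(\pi^j)$. $OPT(u,v)$ is the minimum cost of a path from $u$ to $v$ in $S$ (minima over empty sets are $+\infty$). An abstract state space is $A_i=\langle T_i,\Pi_i,C_i,R_i\rangle$ with $T_i$ a set of abstract states, $\Pi_i\subseteq T_i\times T_i$, and edge weights $C_i,R_i:\Pi_i\to\mathbb{N}$ (primary and residual cost), extended additively to paths. An abstraction of $S$ is a pair $(A_i,\psi_i)$ with $\psi_i:T\to T_i$ such that (1) for every $(u,v)\in\Pi$, $(\psi_i(u),\psi_i(v))\in\Pi_i$, and (2) for every $\pi=(u,v)\in\Pi$, $C_i(\pi_i)+R_i(\pi_i)\le C(\pi)$ where $\pi_i=(\psi_i(u),\psi_i(v))$. The system is additive if for every $\pi\in\Pi$, $\sum_{i=1}^k C_i(\pi_i)\le C(\pi)$.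 Write $t_i=\psi_i(t)$. Define $C^*_i(x,y)=\min\{C_i(\rho):\rho\text{ a path from }x\text{ to }y\text{ in }A_i\}$, $h_{add}(t,g)=\sum_{i=1}^k C^*_i(t_i,g_i)$; $P_i(x,y)$ is the set of paths $\rho$ from $x$ to $y$ in $A_i$ with $C_i(\rho)=C^*_i(x,y)$, and $R^*_i(x,y)=\min_{\rho\in P_i(x,y)}R_i(\rho)$. *)

(* Extended naturals N ∪ {+oo} are represented by option nat,
   with None = +oo. *)
From Stdlib Require Import Arith List Classical ClassicalEpsilon.
Import ListNotations.

Definition eadd (a b : option nat) : option nat :=
  match a, b with Some x, Some y => Some (x + y) | _, _ => None end.

Definition elt (a b : option nat) : Prop :=
  match a, b with
  | Some x, Some y => x < y
  | Some _, None => True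
  | None, _ => False
  end.

Definition is_least (P : nat -> Prop) (n : nat) : Prop :=
  P n /\ forall m, P m -> n <= m.

Definition inf_nat (P : nat -> Prop) : option nat :=
  match excluded_middle_informative (exists n, is_least P n) with
  | left H => Some (proj1_sig (constructive_indefinite_description _ H))
  | right _ => None
  end.

(** Paths as edge sequences, encoded by the start vertex u and the list
    [u^1; ...; u^n] of subsequent vertices; n = 0 is the empty path (u = v). *)
Fixpoint is_path {X : Type} (E : X -> X -> Prop) (u : X) (l : list X) (v : X)
  : Prop :=
  match l with
  | [] => u = v
  | x :: l' => E u x /\ is_path E x l' v
  end.

Fixpoint path_cost {X : Type} (c : X -> X -> nat) (u : X) (l : list X) : nat :=
  match l with
  | [] => 0
  | x :: l' => c u x + path_cost c x l'
  end.

(** State space S = <T, Pi, C>; C is only ever evaluated on edges. *)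
Record StateSpace := {
  st : Type;
  st_finite : exists l : list st, forall x, In x l;
  edge : st -> st -> Prop;
  cost : st -> st -> nat
}.

Record AbsSpace := {
  ast : Type;
  aedge : ast -> ast -> Prop;
  acost : ast -> ast -> nat;
  rcost : ast -> ast -> nat
}.

Definition is_abstraction (S : StateSpace) (A : AbsSpace) (psi : st S -> ast A)
  : Prop :=
  (forall u v, edge S u v -> aedge A (psi u) (psi v)) /\
  (forall u v, edge S u v ->
     acost A (psi u) (psi v) + rcost A (psi u) (psi v) <= cost S u v).

Fixpoint nsum (f : nat -> nat) (n : nat) : nat :=
  match n with 0 => 0 | S n' => nsum f n' + f n' end.

Fixpoint esum (f : nat -> option nat) (n : nat) : option nat :=
  match n with 0 => Some 0 | S n' => eadd (esum f n') (f n') end.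

(** Abstractions are indexed by i = 0 .. k-1 (the paper's 1 .. k). *)
Definition additive (S : StateSpace) (k : nat) (A : nat -> AbsSpace)
  (psi : forall i, st S -> ast (A i)) : Prop :=
  forall u v, edge S u v ->
    nsum (fun i => acost (A i) (psi i u) (psi i v)) k <= cost S u v.

Definition OPT (S : StateSpace) (u v : st S) : option nat :=
  inf_nat (fun c => exists l, is_path (edge S) u l v /\ path_cost (cost S) u l = c).

Definition Cstar (A : AbsSpace) (x y : ast A) : option nat :=
  inf_nat (fun c => exists l, is_path (aedge A) x l y /\ path_cost (acost A) x l = c).

Definition Rstar (A : AbsSpace) (x y : ast A) : option nat :=
  inf_nat (fun r => exists l, is_path (aedge A) x l y /\
             Some (path_cost (acost A) x l) = Cstar A x y /\
             path_cost (rcost A) x l = r).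

Definition h_add (S : StateSpace) (k : nat) (A : nat -> AbsSpace)
  (psi : forall i, st S -> ast (A i)) (t g : st S) : option nat :=
  esum (fun i => Cstar (A i) (psi i t) (psi i g)) k.

(** An optimal path [pi] from [t] to [g] maps into every abstraction [A_i]
    to a path [rho_i] with [C_i*(t_i,g_i) <= C_i(rho_i)], while additivity gives
    [sum_i C_i(rho_i) <= C(pi) = OPT(t,g)].  If [h_add(t,g) = OPT(t,g)], all
    these inequalities are equalities, so [rho_j] is [C_j]-optimal and hence
    [R_j*(t_j,g_j) <= R_j(rho_j)].  Then
    [C_j* + R_j* <= C_j(rho_j) + R_j(rho_j) <= C(pi) = h_add(t,g)]. *)

From Stdlib Require Import Arith List Lia Classical ClassicalEpsilon.

Lemma inf_nat_Some_least (P : nat -> Prop) (n : nat) :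
  inf_nat P = Some n -> is_least P n.
Proof.
  unfold inf_nat. destruct excluded_middle_informative as [H|H]; [|discriminate].
  intros E; injection E as <-.
  exact (proj2_sig (constructive_indefinite_description _ H)).
Qed.

Lemma exists_least (P : nat -> Prop) (m : nat) : P m -> exists n, is_least P n.
Proof.
  induction m as [m IH] using lt_wf_ind; intros Hm.
  destruct (classic (exists m', m' < m /\ P m')) as [[m' [Hlt Hm']]|Hnone].
  - exact (IH m' Hlt Hm').
  - exists m; split; [exact Hm|].
    intros m' Hm'. destruct (le_lt_dec m m') as [Hle|Hlt]; [exact Hle|].
    exfalso; apply Hnone; eauto.
Qed.

Lemma inf_nat_le (P : nat -> Prop) (m : nat) :
  P m -> exists n, inf_nat P = Some n /\ n <= m.
Proof.
  intros Hm. unfold inf_nat.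
  destruct excluded_middle_informative as [Hex|Hno].
  - eexists; split; [reflexivity|].
    exact (proj2 (proj2_sig (constructive_indefinite_description _ Hex)) m Hm).
  - exfalso; exact (Hno (exists_least P m Hm)).
Qed.

Lemma esum_Some_inv (f : nat -> option nat) (k n : nat) :
  esum f k = Some n ->
  exists c : nat -> nat, (forall i, i < k -> f i = Some (c i)) /\ nsum c k = n.
Proof.
  intros E. exists (fun i => match f i with Some x => x | None => 0 end).
  revert n E; induction k as [|k IH]; simpl; intros n E.
  - injection E as <-. split; [intros i Hi; lia|reflexivity].
  - destruct (esum f k) as [a|]; [|discriminate].
    destruct (f k) as [b|] eqn:Eb; [|discriminate].
    injection E as <-. destruct (IH a eq_refl) as [Hc Hsum].
    split; [|rewrite Hsum; reflexivity].
    intros i Hi. destruct (Nat.eq_dec i k) as [->|Hne]; [rewrite Eb; reflexivity|].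
    apply Hc; lia.
Qed.

Lemma nsum_le (a b : nat -> nat) (k : nat) :
  (forall i, i < k -> a i <= b i) -> nsum a k <= nsum b k.
Proof.
  induction k as [|k IH]; simpl; intros Hab; [lia|].
  specialize (IH (fun i Hi => Hab i (Nat.lt_lt_succ_r _ _ Hi))).
  specialize (Hab k (Nat.lt_succ_diag_r k)). lia.
Qed.

Lemma nsum_add (a b : nat -> nat) (k : nat) :
  nsum (fun i => a i + b i) k = nsum a k + nsum b k.
Proof. induction k as [|k IH]; simpl; lia. Qed.

Lemma nsum_le_eq (a b : nat -> nat) (k : nat) :
  (forall i, i < k -> a i <= b i) -> nsum b k <= nsum a k ->
  forall i, i < k -> a i = b i.
Proof.
  induction k as [|k IH]; simpl; intros Hab Hsum i Hi; [lia|].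
  assert (Hle : nsum a k <= nsum b k) by (apply nsum_le; intros; apply Hab; lia).
  assert (Hk := Hab k (Nat.lt_succ_diag_r k)).
  destruct (Nat.eq_dec i k) as [->|Hne]; [lia|].
  apply IH; [intros; apply Hab| |]; lia.
Qed.

Section Paths.

Variable S : StateSpace.

Lemma is_path_abstraction (A : AbsSpace) (psi : st S -> ast A) (u v : st S)
  (l : list (st S)) :
  is_abstraction S A psi -> is_path (edge S) u l v ->
  is_path (aedge A) (psi u) (map psi l) (psi v).
Proof.
  intros [Hedge _]; revert u; induction l as [|x l IH]; simpl; intros u Hp.
  - congruence.
  - destruct Hp as [Hux Hp]. split; [apply Hedge|apply IH]; assumption.
Qed.

Lemma path_cost_abstraction (A : AbsSpace) (psi : st S -> ast A) (u v : st S)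
  (l : list (st S)) :
  is_abstraction S A psi -> is_path (edge S) u l v ->
  path_cost (acost A) (psi u) (map psi l) + path_cost (rcost A) (psi u) (map psi l)
    <= path_cost (cost S) u l.
Proof.
  intros [_ Hcost]; revert u; induction l as [|x l IH]; simpl; intros u Hp; [lia|].
  destruct Hp as [Hux Hp]. specialize (IH x Hp). specialize (Hcost u x Hux). lia.
Qed.

Lemma path_cost_additive (k : nat) (A : nat -> AbsSpace)
  (psi : forall i, st S -> ast (A i)) (u v : st S) (l : list (st S)) :
  additive S k A psi -> is_path (edge S) u l v ->
  nsum (fun i => path_cost (acost (A i)) (psi i u) (map (psi i) l)) k
    <= path_cost (cost S) u l.
Proof.
  intros Hadd; revert u; induction l as [|x l IH]; simpl; intros u Hp.
  - clear. induction k as [|k IH]; simpl; lia.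
  - destruct Hp as [Hux Hp]. specialize (IH x Hp). specialize (Hadd u x Hux).
    rewrite nsum_add. lia.
Qed.

End Paths.

Lemma Cstar_le_path (A : AbsSpace) (x y : ast A) (l : list (ast A)) (c : nat) :
  Cstar A x y = Some c -> is_path (aedge A) x l y -> c <= path_cost (acost A) x l.
Proof.
  intros Hc Hp. apply (proj2 (inf_nat_Some_least _ _ Hc)). eauto.
Qed.

Lemma Rstar_le_optimal_path (A : AbsSpace) (x y : ast A) (l : list (ast A)) :
  is_path (aedge A) x l y -> Cstar A x y = Some (path_cost (acost A) x l) ->
  exists r, Rstar A x y = Some r /\ r <= path_cost (rcost A) x l.
Proof. intros Hp Hopt. apply inf_nat_le. eauto. Qed.

Theorem lemma10 (S : StateSpace) (k : nat) (A : nat -> AbsSpace)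
  (psi : forall i, st S -> ast (A i))
  (Habs : forall i, i < k -> is_abstraction S (A i) (psi i))
  (Hadd : additive S k A psi)
  (t g : st S) (j : nat) (Hj : j < k)
  (Hlt : elt (h_add S k A psi t g)
             (eadd (Cstar (A j) (psi j t) (psi j g))
                   (Rstar (A j) (psi j t) (psi j g)))) :
  h_add S k A psi t g <> OPT S t g.
Proof.
  intros Heq.
  destruct (h_add S k A psi t g) as [n|] eqn:Eh; [|contradiction].
  destruct (esum_Some_inv _ _ _ Eh) as [c [Hc Hn]].
  destruct (proj1 (inf_nat_Some_least _ _ (eq_sym Heq))) as [l [Hp Hcost]].
  set (rhocost i := path_cost (acost (A i)) (psi i t) (map (psi i) l)).
  assert (Hge : forall i, i < k -> c i <= rhocost i).
  { intros i Hi. apply (Cstar_le_path _ _ _ _ _ (Hc i Hi)).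
    exact (is_path_abstraction S _ _ _ _ _ (Habs i Hi) Hp). }
  assert (Hopt : rhocost j = c j).
  { symmetry. apply (nsum_le_eq c rhocost k Hge); [|exact Hj].
    rewrite Hn, <- Hcost. exact (path_cost_additive S k A psi t g l Hadd Hp). }
  destruct (Rstar_le_optimal_path (A j) _ _ (map (psi j) l)
              (is_path_abstraction S _ _ _ _ _ (Habs j Hj) Hp))
    as [r [Hr Hrle]].
  { fold (rhocost j). rewrite Hopt. exact (Hc j Hj). }
  pose proof (path_cost_abstraction S _ _ _ _ _ (Habs j Hj) Hp) as Hj_cost.
  rewrite (Hc j Hj), Hr in Hlt. simpl in Hlt. fold (rhocost j) in Hj_cost. lia.
Qed.
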